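(* Let $S$ be a numerical semigroup. For every $s\in S$ with $\mathfrak d(s)\ge2$ there exists $d\in\mathcal E(S)$ with $d\le_S s$.
   Context: A numerical semigroup $S$ is a submonoid of $(\mathbb N,+)$ with finite complement, with minimal generating set $A=\{n_1,\dots,n_e\}$. The cyclotomic exponent sequence is the unique integer sequence $(e_j)_{j\ge1}$ with $(1-x)\sum_{s\in S}x^s=\prod_{j\ge1}(1-x^j)^{e_j}$ in $\mathbb Z[[x]]$; $\mathcal E(S)=\{d\in\mathbb N: d\ge2,\ e_d\ne0,\ d\notin A\}$. Write $a\le_S b$ if $b-a\in S$. With $\varphi:\mathbb N^e\to S$, $\varphi(a)=\sum_ia_in_i$, $\mathfrak d(s)=|\varphi^{-1}(s)|$ is the number of factorizations of $s$. *)

From HB Require Import structures.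
From mathcomp Require Import all_boot all_order all_algebra.
Set Implicit Arguments. Unset Strict Implicit. Unset Printing Implicit Defensive.
Import Order.TTheory GRing.Theory Num.Theory.

Definition numerical_semigroup (S : pred nat) : Prop :=
  [/\ S 0, (forall a b, S a -> S b -> S (a + b)) &
      exists N, forall n, N <= n -> S n].

Definition phi (A : seq nat) (c : nat -> nat) : nat :=
  \sum_(i < size A) c i * nth 0 A i.

Definition generates (S : pred nat) (A : seq nat) : Prop :=
  forall s, S s <-> exists c : nat -> nat, phi A c = s.

Definition minimal_generating_set (S : pred nat) (A : seq nat) : Prop :=
  [/\ uniq A, generates S A &
      forall B : seq nat, {subset B <= A} -> generates S B -> {subset A <= B}].

(* Every factorization c of s (with all n_i >= 1) satisfies c_i <= s,
   so it suffices to count coefficient vectors with entries in [0, s]. *)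
Definition nfact (A : seq nat) (s : nat) : nat :=
  #|[set c : {ffun 'I_(size A) -> 'I_s.+1} |
      \sum_(i < size A) (c i : nat) * nth 0 A i == s]|.

Local Open Scope ring_scope.

Definition trunc (N : nat) (p : {poly int}) : {poly int} :=
  \poly_(i < N.+1) p`_i.

(* Truncation (mod x^(N+1)) of the power series 1/(1 - x^j), j >= 1. *)
Definition geom_trunc (j N : nat) : {poly int} :=
  \sum_(k < N.+1) 'X^(j * k).

(* A representative mod x^(N+1) of (1 - x^j)^e for e : int. *)
Definition cyc_factor (N j : nat) (e : int) : {poly int} :=
  if 0 <= e then (1 - 'X^j) ^+ `|e|%N else geom_trunc j N ^+ `|e|%N.

(* e is the cyclotomic exponent sequence of S:
     (1 - x) * sum_{s in S} x^s = prod_{j >= 1} (1 - x^j)^(e_j)  in Z[[x]],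
   expressed as equality of all truncations mod x^(N+1) (factors with
   j > N are congruent to 1 mod x^(N+1)). *)
Definition cyclotomic_exponents (S : pred nat) (e : nat -> int) : Prop :=
  forall N : nat,
    trunc N ((1 - 'X) * \sum_(s < N.+1 | S s) 'X^s) =
    trunc N (\prod_(1 <= j < N.+1) cyc_factor N j (e j)).

Definition in_E (A : seq nat) (e : nat -> int) (d : nat) : Prop :=
  (2 <= d)%N /\ e d != 0 /\ d \notin A.

Definition leS (S : pred nat) (a b : nat) : Prop := (a <= b)%N /\ S (b - a)%N.

From mathcomp Require Import all_boot all_order all_algebra.
From mathcomp Require Import zify.
Set Implicit Arguments. Unset Strict Implicit. Unset Printing Implicit Defensive.
Import Order.TTheory GRing.Theory Num.Theory.

(* Let s be in S with at least two factorizations.  Write H for the Hilbert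
   series sum_{u in S} x^u and c_j for the factor (1 - x^j)^(e_j), everything
   being computed modulo x^(s+1).  Assuming, for a contradiction, that e_d = 0
   for every d >= 2 outside A with d <=_S s, we show that d(s) = 1.
   - Coefficients at atoms: if the factors of a product are series supported
     on a submonoid M of N with constant term 1 and t is an atom of M, the
     coefficient of x^t in the product is the sum of those of the factors.
   - With M = N and t = 1 this gives e_1 = 1 (1 being a gap); with
     M = {0} u [m, oo), by induction on the gaps m >= 2, it gives e_m = 0.
     Hence H = prod_{j in S} c_j.  With M = S and t = a in A it gives e_a = -1.
   - Modulo the monomials x^t with s - t notin S (an ideal of the semigroup
     ring of S), c_j agrees with 1/(1 - x^j) if j is in A and with 1 otherwise,
     so d(s) = [x^s] prod_{a in A} 1/(1 - x^a) = [x^s] H = 1.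
   Sections: Supports (submonoids, atoms, series supported on a submonoid,
   coefficients at atoms), Factors (the truncated 1/(1 - x^j) and c_j),
   Congruences (modulo x^(N+1), and modulo the ideal above), Generators
   (minimal generators are the atoms of S), Counting (d(s) as a coefficient),
   Exponents (the values of e_j and the count d(s) = 1); the theorem is last. *)

Section Supports.
Local Open Scope ring_scope.

Definition submonoid (M : pred nat) : Prop :=
  M 0%N /\ forall a b, M a -> M b -> M (a + b)%N.

Definition multiples (j : nat) : pred nat := [pred i | j %| i]%N.
Definition from (m : nat) : pred nat := [pred i | (i == 0) || (m <= i)]%N.

Lemma submonoid_multiples j : submonoid (multiples j).
Proof. by split=> [|a b]; rewrite /multiples /= ?dvdn0 // => ja jb; apply: dvdn_add. Qed.

Lemma submonoid_from m : submonoid (from m).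
Proof.
split=> // a b; rewrite /from /= => /orP[/eqP->|ma] // /orP[/eqP->|_].
  by rewrite addn0 ma orbT.
by rewrite (leq_trans ma (leq_addr _ _)) orbT.
Qed.

Lemma multiples_sub (M : pred nat) j : submonoid M -> M j -> {subset multiples j <= M}.
Proof.
move=> [M0 MD] Mj i /dvdnP[k ->]; elim: k => [|k IH]; first by rewrite mul0n.
by rewrite mulSn; apply: MD.
Qed.

Lemma multiples_from j : {subset multiples j <= from j}.
Proof.
move=> i; rewrite !inE => ji; case: (posnP i) => [->//|i_pos].
by rewrite dvdn_leq ?orbT.
Qed.

Definition atom (M : pred nat) (t : nat) : Prop :=
  (0 < t)%N /\ forall k, (0 < k < t)%N -> M k -> ~~ M (t - k)%N.

Lemma atom_multiples j : (0 < j)%N -> atom (multiples j) j.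
Proof.
move=> j_pos; split=> // k /andP[k_pos kj]; rewrite /multiples /= => /(dvdn_leq k_pos).
by rewrite leqNgt kj.
Qed.

Lemma atom_from m : (0 < m)%N -> atom (from m) m.
Proof.
move=> m_pos; split=> // k /andP[k_pos km]; rewrite /from /= leqNgt km orbF => _.
by rewrite negb_or subn_eq0 -!ltnNge km ltn_subrL k_pos m_pos.
Qed.

Definition supported (M : pred nat) (p : {poly int}) : Prop :=
  forall i, p`_i != 0 -> M i.

Lemma coef_unsupported (M : pred nat) p i : supported M p -> ~~ M i -> p`_i = 0.
Proof. by move=> Mp Mi; apply/eqP; apply: contraR Mi; apply: Mp. Qed.

Lemma supported_sub (M M' : pred nat) p :
  {subset M <= M'} -> supported M p -> supported M' p.
Proof. by move=> MM' Mp i /Mp /MM'. Qed.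

Lemma supportedD (M : pred nat) p q :
  supported M p -> supported M q -> supported M (p + q).
Proof.
move=> Mp Mq i; rewrite coefD; apply: contraR => Mi.
by rewrite !(coef_unsupported _ Mi).
Qed.

Lemma supportedN (M : pred nat) p : supported M p -> supported M (- p).
Proof. by move=> Mp i; rewrite coefN oppr_eq0; apply: Mp. Qed.

Lemma supportedXn (M : pred nat) n : M n -> supported M 'X^n.
Proof. by move=> Mn i; rewrite coefXn; case: (i =P n) => [->|]; rewrite ?eqxx. Qed.

Lemma supportedM (M : pred nat) p q :
  submonoid M -> supported M p -> supported M q -> supported M (p * q).
Proof.
move=> [_ MD] Mp Mq i; rewrite coefM; apply: contraR => Mi; rewrite big1 // => k _.
case: (boolP (M k)) => Mk; last by rewrite (coef_unsupported Mp Mk) mul0r.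
case: (boolP (M (i - k)%N)) => Mik; last by rewrite (coef_unsupported Mq Mik) mulr0.
have ki : (k <= i)%N by rewrite -ltnS.
by case/negP: Mi; rewrite -(subnKC ki); apply: MD.
Qed.

Definition unitary (M : pred nat) (p : {poly int}) : Prop := supported M p /\ p`_0 = 1.

Lemma unitary1 (M : pred nat) : submonoid M -> unitary M 1.
Proof. by move=> [M0 _]; split; [rewrite -(expr0 'X); apply: supportedXn | rewrite coef1]. Qed.

Lemma unitaryM (M : pred nat) p q :
  submonoid M -> unitary M p -> unitary M q -> unitary M (p * q).
Proof.
move=> HM [Mp p0] [Mq q0]; split; first exact: supportedM.
by rewrite coef0M p0 q0 mulr1.
Qed.

Lemma unitaryX (M : pred nat) p n : submonoid M -> unitary M p -> unitary M (p ^+ n).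
Proof.
move=> HM Mp; elim: n => [|n IH]; first exact: unitary1.
by rewrite exprS; apply: unitaryM.
Qed.

Lemma unitary_sub (M M' : pred nat) p : {subset M <= M'} -> unitary M p -> unitary M' p.
Proof. by move=> MM' [Mp p0]; split=> //; apply: supported_sub Mp. Qed.

Lemma coefM_ends (p q : {poly int}) t : (0 < t)%N ->
  (forall k, (0 < k < t)%N -> p`_k * q`_(t - k) = 0) ->
  (p * q)`_t = p`_0 * q`_t + p`_t * q`_0.
Proof.
case: t => [//|t] _ mid; rewrite coefM big_ord_recl big_ord_recr /= big1.
  by rewrite add0r subn0 subnn.
by move=> i _; apply: mid => /=; rewrite /bump /= add1n ltnS ltn_ord.
Qed.

Lemma coefM_atom (M : pred nat) t p q :
  atom M t -> unitary M p -> unitary M q -> (p * q)`_t = p`_t + q`_t.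
Proof.
move=> [t_pos tM] [Mp p0] [Mq q0].
rewrite coefM_ends // ?p0 ?q0 ?mul1r ?mulr1 1?addrC // => k kt.
case: (boolP (M k)) => Mk; last by rewrite (coef_unsupported Mp Mk) mul0r.
by rewrite (coef_unsupported Mq (tM k kt Mk)) mulr0.
Qed.

Lemma unitary_prod (M : pred nat) (I : eqType) (r : seq I) (P : pred I)
    (F : I -> {poly int}) :
  submonoid M -> (forall i, i \in r -> P i -> unitary M (F i)) ->
  unitary M (\prod_(i <- r | P i) F i).
Proof.
move=> HM; elim: r => [|x r IH] HF; first by rewrite big_nil; apply: unitary1.
have HFr : forall i, i \in r -> P i -> unitary M (F i).
  by move=> i ir; apply: HF; rewrite inE ir orbT.
rewrite big_cons; case: ifP => Px; last exact: IH.
exact: unitaryM HM (HF x (mem_head x r) Px) (IH HFr).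
Qed.

Lemma coef_prod_atom (M : pred nat) t (I : eqType) (r : seq I) (P : pred I)
    (F : I -> {poly int}) :
  submonoid M -> atom M t -> (forall i, i \in r -> P i -> unitary M (F i)) ->
  (\prod_(i <- r | P i) F i)`_t = \sum_(i <- r | P i) (F i)`_t.
Proof.
move=> HM Mt; elim: r => [|x r IH] HF.
  by rewrite !big_nil coef1; case: Mt => t_pos _; rewrite gtn_eqF.
have HFr : forall i, i \in r -> P i -> unitary M (F i).
  by move=> i ir; apply: HF; rewrite inE ir orbT.
rewrite !big_cons -(IH HFr); case: ifP => // Px; rewrite (coefM_atom Mt) //.
  by apply: HF; rewrite ?mem_head.
exact: unitary_prod.
Qed.

Lemma sum_single (I : eqType) (r : seq I) (P : pred I) (F : I -> int) m :
  uniq r -> m \in r -> P m ->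
  (forall j, j \in r -> P j -> j != m -> F j = 0) -> \sum_(j <- r | P j) F j = F m.
Proof.
move=> r_uniq mr Pm F0; rewrite big_mkcond (bigD1_seq m) //= Pm big1_seq ?addr0 //.
by move=> j /andP[jm jr]; case: ifP => // Pj; apply: F0.
Qed.

Lemma coefX_atom (M : pred nat) t p n :
  submonoid M -> atom M t -> unitary M p -> (p ^+ n)`_t = p`_t *+ n.
Proof.
move=> HM Mt Mp; elim: n => [|n IH]; first by case: Mt => t_pos _; rewrite expr0 coef1 gtn_eqF.
by rewrite exprS (coefM_atom Mt) ?IH ?mulrS //; apply: unitaryX.
Qed.

End Supports.

Section Factors.
Local Open Scope ring_scope.

Lemma geom_supported j N : supported (multiples j) (geom_trunc j N).
Proof.
apply: big_ind => [i|p q|k _]; first by rewrite coef0 eqxx.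
  exact: supportedD.
by apply: supportedXn; rewrite /multiples /= dvdn_mulr.
Qed.

Lemma coef_geom j N i : (0 < j)%N -> (i <= N)%N ->
  (geom_trunc j N)`_i = (j %| i)%:R.
Proof.
move=> j_pos iN; rewrite /geom_trunc coef_sum.
under eq_bigr do rewrite coefXn.
case: (boolP (j %| i)%N) => ji; last first.
  by rewrite big1 // => k _; case: eqP => // ik; case/negP: ji; rewrite ik dvdn_mulr.
have iq : (i %/ j < N.+1)%N by rewrite ltnS (leq_trans (leq_div _ _) iN).
rewrite (bigD1 (Ordinal iq)) //= mulnC divnK // eqxx big1 ?addr0 // => k kq.
case: eqP => // ik; case/negP: kq; apply/eqP/val_inj => /=.
by rewrite ik mulKn.
Qed.

Lemma unitary_geom j N : (0 < j)%N -> unitary (multiples j) (geom_trunc j N).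
Proof. by move=> j_pos; split; [apply: geom_supported | rewrite coef_geom ?dvdn0]. Qed.

Lemma unitary_1subXn j : (0 < j)%N -> unitary (multiples j) (1 - 'X^j).
Proof.
move=> j_pos; split; last by rewrite coefB coef1 coefXn; case: j j_pos; rewrite ?subr0.
apply: supportedD; last by apply/supportedN/supportedXn; rewrite /multiples /= dvdnn.
by case: (unitary1 (submonoid_multiples j)).
Qed.

Lemma unitary_cyc N j e : (0 < j)%N -> unitary (multiples j) (cyc_factor N j e).
Proof.
move=> j_pos; rewrite /cyc_factor; case: ifP => _; apply: unitaryX (submonoid_multiples j) _.
  exact: unitary_1subXn.
exact: unitary_geom.
Qed.

Lemma coef_cyc N j e : (0 < j)%N -> (j <= N)%N -> (cyc_factor N j e)`_j = - e.
Proof.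
move=> j_pos jN; have Mj := atom_multiples j_pos.
rewrite /cyc_factor; case: ifP => e_ge0.
  rewrite (coefX_atom _ (submonoid_multiples j) Mj (unitary_1subXn j_pos)).
  rewrite coefB coef1 coefXn eqxx (negbTE (lt0n_neq0 j_pos)) sub0r mulNrn.
  by rewrite /= natz abszE ger0_norm.
rewrite (coefX_atom _ (submonoid_multiples j) Mj (unitary_geom N j_pos)).
by rewrite coef_geom // dvdnn /= natz abszE ltr0_norm // ltNge e_ge0.
Qed.

Lemma cyc0 N j : cyc_factor N j 0 = 1.
Proof. by rewrite /cyc_factor lexx expr0. Qed.

Lemma cycN1 N j : cyc_factor N j (-1) = geom_trunc j N.
Proof. by rewrite /cyc_factor expr1. Qed.

Lemma cyc1 N : cyc_factor N 1 1 = 1 - 'X.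
Proof. by rewrite /cyc_factor !expr1. Qed.

End Factors.

Section Congruences.
Local Open Scope ring_scope.

Definition eq_upto (N : nat) (p q : {poly int}) : Prop :=
  forall i, (i <= N)%N -> p`_i = q`_i.

Lemma eq_upto_trunc N p q : trunc N p = trunc N q -> eq_upto N p q.
Proof.
move=> pq i iN; have := congr1 (fun r : {poly int} => r`_i) pq.
by rewrite !coef_poly ltnS iN.
Qed.

Lemma eq_uptoM N p p' q q' :
  eq_upto N p p' -> eq_upto N q q' -> eq_upto N (p * q) (p' * q').
Proof.
move=> pp' qq' i iN; rewrite !coefM; apply: eq_bigr => k _.
have ki : (k <= i)%N by rewrite -ltnS.
by rewrite pp' ?qq' ?(leq_trans ki iN) ?(leq_trans (leq_subr k i) iN).
Qed.

(* 1 - x is invertible modulo x^(N+1), with inverse 1 + x + ... + x^N. *)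
Lemma eq_upto_cancel1subX N p q :
  eq_upto N ((1 - 'X) * p) ((1 - 'X) * q) -> eq_upto N p q.
Proof.
have inv1subX : eq_upto N (geom_trunc 1 N * (1 - 'X)) 1.
  move=> [|i] iN; rewrite mulrBr mulr1 coefB coefMX coef1 coef_geom ?dvd1n //=.
  by rewrite coef_geom ?dvd1n ?subrr // ltnW.
move=> pq i iN.
have refl r : eq_upto N r r by [].
rewrite -[p]mul1r -[q]mul1r -(eq_uptoM inv1subX (refl p)) //.
by rewrite -(eq_uptoM inv1subX (refl q)) // -!mulrA (eq_uptoM (refl _) pq).
Qed.

Lemma eq_upto_from N p : unitary (from N.+1) p -> eq_upto N p 1.
Proof.
move=> [Mp p0] [|i] iN; first by rewrite p0 coef1.
by rewrite coef1 (coef_unsupported Mp) // /from /= -ltnNge ltnS.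
Qed.

(* On S-supported series this is
   congruence modulo the ideal of the semigroup ring of S spanned by the x^t
   with N - t notin S, hence it is compatible with products. *)
Definition agree (S : pred nat) (N : nat) (p q : {poly int}) : Prop :=
  forall t, (t <= N)%N -> S (N - t)%N -> p`_t = q`_t.

Lemma agreeM (S : pred nat) N p p' q q' : submonoid S ->
  supported S p -> supported S p' -> supported S q -> supported S q' ->
  agree S N p p' -> agree S N q q' -> agree S N (p * q) (p' * q').
Proof.
move=> [_ SD] Sp Sp' Sq Sq' pp' qq' t tN St; rewrite !coefM; apply: eq_bigr => k _.
have kt : (k <= t)%N by rewrite -ltnS.
case: (boolP (S k)) => Sk; last by rewrite !(coef_unsupported _ Sk) // !mul0r.
case: (boolP (S (t - k)%N)) => Stk; last by rewrite !(coef_unsupported _ Stk) // !mulr0.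
have NtSk : (N - (t - k) = (N - t) + k)%N by lia.
have NkSt : (N - k = (N - t) + (t - k))%N by lia.
by rewrite pp' ?qq' ?NtSk ?NkSt ?SD //; lia.
Qed.

Lemma agree_prod (S : pred nat) N (I : eqType) (r : seq I) (P : pred I)
    (F G : I -> {poly int}) : submonoid S ->
  (forall i, i \in r -> P i ->
     [/\ unitary S (F i), unitary S (G i) & agree S N (F i) (G i)]) ->
  agree S N (\prod_(i <- r | P i) F i) (\prod_(i <- r | P i) G i).
Proof.
move=> HS; elim: r => [|x r IH] HFG; first by rewrite !big_nil.
have HFGr : forall i, i \in r -> P i ->
    [/\ unitary S (F i), unitary S (G i) & agree S N (F i) (G i)].
  by move=> i ir; apply: HFG; rewrite inE ir orbT.
rewrite !big_cons; case: ifP => Px; last exact: IH.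
have [[SF _] [SG _] FG] := HFG x (mem_head x r) Px.
have [SPF _] : unitary S (\prod_(i <- r | P i) F i).
  by apply: unitary_prod => // i ir Pi; case: (HFGr i ir Pi).
have [SPG _] : unitary S (\prod_(i <- r | P i) G i).
  by apply: unitary_prod => // i ir Pi; case: (HFGr i ir Pi).
by apply: agreeM => //; apply: IH.
Qed.

Lemma agree_one (S : pred nat) N j p : submonoid S -> S j ->
  unitary (multiples j) p -> ~~ S (N - j)%N -> agree S N p 1.
Proof.
move=> HS Sj [jp p0] SNj t tN St; rewrite coef1; case: (posnP t) => [->//|t_pos].
apply/eqP; apply: contraR SNj => /jp; rewrite /multiples /= => jt.
have jt' : (j <= t)%N by apply: dvdn_leq.
have -> : (N - j = (N - t) + (t - j))%N by lia.
have [_ SD] := HS; apply: SD => //; apply: (multiples_sub HS Sj).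
by rewrite inE dvdn_sub.
Qed.

End Congruences.

Section Generators.
Variable S : pred nat.
Hypothesis HS : submonoid S.

Definition generated (B : seq nat) (x : nat) : Prop :=
  exists c : nat -> nat, phi B c = x.

Lemma generated0 B : generated B 0.
Proof. by exists (fun _ => 0); rewrite /phi big1. Qed.

Lemma generatedD B x y : generated B x -> generated B y -> generated B (x + y).
Proof.
move=> [c1 <-] [c2 <-]; exists (fun i => c1 i + c2 i).
by rewrite /phi -big_split /=; apply: eq_bigr => i _; rewrite mulnDl.
Qed.

Lemma generatedM B k x : generated B x -> generated B (k * x).
Proof.
move=> Bx; elim: k => [|k IH]; first by rewrite mul0n; apply: generated0.
by rewrite mulSn; apply: generatedD.
Qed.

Lemma generated_mem B x : x \in B -> generated B x.
Proof.
move=> xB; exists (fun i => (i == index x B) : nat).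
have iB : index x B < size B by rewrite index_mem.
rewrite /phi (bigD1 (Ordinal iB)) //= eqxx mul1n nth_index // big1 ?addn0 //.
by move=> i ix; case: eqP => // ixB; case/eqP: ix; apply: val_inj.
Qed.

Lemma phi_generated B C c :
  (forall b, b \in B -> generated C b) -> generated C (phi B c).
Proof.
move=> BC; apply: (big_ind (generated C)); [exact: generated0 | exact: generatedD |].
by move=> i _; apply/generatedM/BC; rewrite mem_nth.
Qed.

Variable A : seq nat.
Hypothesis HA : minimal_generating_set S A.

Lemma mem_generators a : a \in A -> S a.
Proof. by case: HA => _ AS _ aA; apply/AS/generated_mem. Qed.

Lemma generator_irredundant a : a \in A -> ~ generated [seq x <- A | x != a] a.
Proof.
case: HA => _ AS Amin aA Ba; set B := [seq x <- A | x != a] in Ba.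
have BA : {subset B <= A} by move=> x; rewrite mem_filter => /andP[].
have BS : generates S B.
  move=> x; split.
    move/AS => [c <-]; apply: phi_generated => b bA.
    by case: (eqVneq b a) => [->//|ba]; apply: generated_mem; rewrite mem_filter ba.
  move=> [c <-]; apply: (big_ind S); [by case: HS | by case: HS|].
  move=> i _; have SAi := mem_generators (BA _ (mem_nth 0 (ltn_ord i))).
  by rewrite mulnC; apply: (multiples_sub HS SAi); rewrite inE dvdn_mulr.
by have := Amin B BA BS a aA; rewrite mem_filter eqxx.
Qed.

Lemma generator_pos a : a \in A -> 0 < a.
Proof.
move=> aA; rewrite lt0n; apply/eqP => a0; apply: (generator_irredundant aA).
by rewrite a0; apply: generated0.
Qed.

Lemma generated_below a y :
  a \in A -> S y -> y < a -> generated [seq x <- A | x != a] y.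
Proof.
case: HA => _ AS _ aA /AS [c <-] ya; apply: (big_ind (generated _)).
- exact: generated0.
- exact: generatedD.
move=> i _; case: (posnP (c i)) => [->|ci_pos]; first by rewrite mul0n; apply: generated0.
apply/generatedM/generated_mem; rewrite mem_filter mem_nth // andbT.
apply/eqP => ia; move: ya; rewrite /phi (bigD1 i) //= ia.
by have := leq_pmull a ci_pos; lia.
Qed.

Lemma generator_atom a : a \in A -> atom S a.
Proof.
move=> aA; split; first exact: generator_pos.
move=> k /andP[k_pos ka] Sk; apply/negP => Sak; apply: (generator_irredundant aA).
rewrite [X in generated _ X](_ : a = k + (a - k)); last by rewrite subnKC // ltnW.
by apply: generatedD; apply: generated_below; rewrite // ltn_subrL k_pos (ltn_trans k_pos ka).
Qed.

Lemma generators_when_one : S 1 -> perm_eq A [:: 1].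
Proof.
move=> S1; have Sall n : S n by apply: (multiples_sub HS S1); rewrite inE dvd1n.
have A1 a : a \in A -> a = 1.
  move=> aA; have [a_pos aS] := generator_atom aA.
  apply/eqP; rewrite eqn_leq a_pos andbT leqNgt; apply/negP => a_gt1.
  by case/negP: (aS 1 a_gt1 (Sall 1)).
have [Auniq AS _] := HA.
have oneA : 1 \in A.
  have [c] := (AS 1).1 S1; case: A A1 => [|x r] A1; first by rewrite /phi big_ord0.
  by rewrite -(A1 x) ?mem_head.
apply: uniq_perm => // y; rewrite mem_seq1.
by apply/idP/eqP => [/A1 //|->].
Qed.

End Generators.

Section Counting.
Local Open Scope ring_scope.

Lemma nfact_coef (A : seq nat) s :
  (nfact A s)%:R = (\prod_(a <- A) geom_trunc a s)`_s :> int.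
Proof.
rewrite (big_nth 0%N) big_mkord /geom_trunc bigA_distr_bigA /= coef_sum.
under eq_bigr do rewrite prodrXr coefXn.
rewrite /nfact cardsE -sum1_card natr_sum big_mkcond /=.
apply: eq_bigr => c _; rewrite unfold_in eq_sym.
rewrite (eq_bigr (fun i : 'I_(size A) => nth 0 A i * c i)%N) => [|i _]; last exact: mulnC.
by rewrite -[eqn _ _]/(_ == _); case: eqP.
Qed.

Lemma prod_geom_beyond (A : seq nat) s :
  eq_upto s (\prod_(a <- A | ~~ (a <= s)%N) geom_trunc a s) 1.
Proof.
apply: eq_upto_from; apply: unitary_prod (submonoid_from _) _ => a _.
rewrite -ltnNge => a_gt.
apply: unitary_sub (unitary_geom _ (leq_ltn_trans (leq0n s) a_gt)) => i /multiples_from.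
by rewrite !inE => /orP[->//|ai]; rewrite (leq_trans a_gt ai) orbT.
Qed.

Lemma nfact0 (A : seq nat) : nfact A 0 = 1%N.
Proof.
apply/eqP; rewrite -(eqr_nat int) nfact_coef big1 ?coef1 // => a _.
by rewrite /geom_trunc big_ord1 muln0 expr0.
Qed.

Lemma nfact_one_in (S : pred nat) (A : seq nat) s :
  submonoid S -> minimal_generating_set S A -> S 1%N -> nfact A s = 1%N.
Proof.
move=> HS HA S1; apply/eqP; rewrite -(eqr_nat int) nfact_coef.
by rewrite (perm_big _ (generators_when_one HS HA S1)) big_seq1 coef_geom ?dvd1n.
Qed.

End Counting.

Section Exponents.
Local Open Scope ring_scope.
Variables (S : pred nat) (A : seq nat) (e : nat -> int) (s : nat).
Hypothesis HS : submonoid S.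
Hypothesis HA : minimal_generating_set S A.
Hypothesis He : cyclotomic_exponents S e.
Hypothesis S1 : ~~ S 1%N.
Hypothesis s_pos : (0 < s)%N.

Let c j := cyc_factor s j (e j).
Let H : {poly int} := \sum_(u < s.+1 | S u) 'X^u.
Let P := \prod_(2 <= j < s.+1 | S j) c j.
Let Q := \prod_(2 <= j < s.+1 | ~~ S j) c j.

Lemma coef_H i : (i <= s)%N -> H`_i = (S i)%:R.
Proof.
move=> i_le; rewrite coef_sum; under eq_bigr do rewrite coefXn.
case: (boolP (S i)) => Si; last first.
  by rewrite big1 // => k Sk; case: eqP => // ik; case/negP: Si; rewrite ik.
have i_lt : (i < s.+1)%N by [].
rewrite (bigD1 (Ordinal i_lt)) //= eqxx big1 ?addr0 // => k /andP[_ ki].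
by case: eqP => // ik; case/eqP: ki; apply: val_inj.
Qed.

Lemma unitary_c (M : pred nat) j :
  (0 < j)%N -> {subset multiples j <= M} -> unitary M (c j).
Proof. by move=> j_pos jM; apply: unitary_sub jM (unitary_cyc _ _ j_pos). Qed.

Lemma coef_c_nondiv j t : (0 < j)%N -> ~~ (j %| t)%N -> (c j)`_t = 0.
Proof. by move=> j_pos jt; apply: coef_unsupported (unitary_cyc s (e j) j_pos).1 _. Qed.

(* Comparing coefficients of x^1 in the defining identity: e_1 = 1. *)
Lemma exponent_one : e 1%N = 1.
Proof.
have := eq_upto_trunc (He s) s_pos.
rewrite mulrBl mul1r coefB coefXM /= !coef_H // (negbTE S1).
have [S0 _] := HS; rewrite S0.
have N_monoid : submonoid predT by [].
have one_atom : atom predT 1 by split=> // k; lia.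
rewrite (coef_prod_atom N_monoid one_atom); last first.
  by move=> j; rewrite mem_index_iota => /andP[j_pos _] _; apply: unitary_c.
rewrite big_ltn // big_nat_cond big1 ?addr0 => [|j /andP[/andP[j_gt1 _] _]].
  by rewrite coef_cyc // sub0r => /oppr_inj.
by apply: coef_c_nondiv; rewrite ?(ltnW j_gt1) ?dvdn1 ?gtn_eqF.
Qed.

(* Modulo x^(s+1), H = P * Q: the factor 1 - x = c_1 cancels. *)
Lemma hilbert_split : eq_upto s H (P * Q).
Proof.
apply: eq_upto_cancel1subX => i i_le.
by rewrite (eq_upto_trunc (He s)) // big_ltn // /c exponent_one cyc1 (bigID S).
Qed.

Lemma P_factor j : j \in index_iota 2 s.+1 -> S j -> unitary S (c j).
Proof.
rewrite mem_index_iota => /andP[j_gt1 _] Sj.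
exact: unitary_c (ltnW j_gt1) (multiples_sub HS Sj).
Qed.

(* Every gap m >= 2 of S below s has exponent 0.  By induction on m, the factors
   of Q are series in x^0 and x^m, x^(m+1), ...; comparing coefficients of x^m
   in H = P * Q gives 0 = -e_m. *)
Lemma gap_exponent m : (2 <= m <= s)%N -> ~~ S m -> e m = 0.
Proof.
elim/ltn_ind: m => m IH /andP[m_gt1 m_le] Sm; have m_pos := ltnW m_gt1.
have c_off j : j \in index_iota 2 s.+1 -> ~~ S j -> j != m -> (c j)`_m = 0.
  rewrite mem_index_iota => jr Sj jm; have /andP[j_gt1 _] := jr.
  case: (ltngtP j m) => [j_lt|j_gt|/eqP].
  - by rewrite /c (IH j j_lt jr Sj) cyc0 coef1 gtn_eqF.
  - apply: coef_c_nondiv (ltnW j_gt1) _; apply/negP => /(dvdn_leq m_pos).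
    by rewrite leqNgt j_gt.
  - by rewrite (negbTE jm).
have Q_from j : j \in index_iota 2 s.+1 -> ~~ S j -> unitary (from m) (c j).
  rewrite mem_index_iota => jr Sj; have /andP[j_gt1 _] := jr.
  case: (ltnP j m) => [jm|mj].
    by rewrite /c (IH j jm jr Sj) cyc0; apply: unitary1 (submonoid_from m).
  apply: unitary_c (ltnW j_gt1) _ => i /multiples_from; rewrite !inE.
  by case/orP=> [->//|ji]; rewrite (leq_trans mj ji) orbT.
have [QM Q0] : unitary (from m) Q by apply: unitary_prod (submonoid_from m) Q_from.
have [PS P0] : unitary S P := unitary_prod HS P_factor.
have := hilbert_split m_le; rewrite coef_H // (negbTE Sm).
rewrite coefM_ends // => [|k /andP[k_pos km]]; last first.
  rewrite (coef_unsupported QM) ?mulr0 // /from /= negb_or subn_eq0 -!ltnNge km.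
  by rewrite ltn_subrL k_pos.
rewrite P0 Q0 (coef_unsupported PS Sm) mul0r addr0 mul1r.
rewrite (coef_prod_atom (submonoid_from m) (atom_from m_pos) Q_from).
rewrite (sum_single (iota_uniq _ _) _ Sm c_off); last by rewrite mem_index_iota m_gt1.
by rewrite coef_cyc // => /esym/eqP; rewrite oppr_eq0 => /eqP.
Qed.

Lemma hilbert_eq : eq_upto s H P.
Proof.
have -> : P = P * Q.
  rewrite [Q]big_seq_cond big1 ?mulr1 // => j /andP[jr Sj].
  by rewrite mem_index_iota in jr; rewrite /c gap_exponent ?cyc0.
exact: hilbert_split.
Qed.

Lemma generator_gt1 a : a \in A -> (1 < a)%N.
Proof.
move=> aA; rewrite ltn_neqAle eq_sym (generator_pos HS HA aA) andbT.
by apply: contraNneq S1 => <-; apply: (mem_generators HA aA).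
Qed.

(* Every generator a <= s has exponent -1: compare coefficients of x^a in H = P,
   a being an atom of S. *)
Lemma generator_exponent a : a \in A -> (a <= s)%N -> e a = -1.
Proof.
move=> aA a_le; have [a_pos aS] := generator_atom HS HA aA.
have Sa := mem_generators HA aA.
have c_off j : j \in index_iota 2 s.+1 -> S j -> j != a -> (c j)`_a = 0.
  rewrite mem_index_iota => /andP[j_gt1 _] Sj ja; have j_pos := ltnW j_gt1.
  apply: (coef_c_nondiv j_pos); apply/negP => ja_div.
  have j_lt : (j < a)%N by rewrite ltn_neqAle ja dvdn_leq.
  case/negP: (aS j (introT andP (conj j_pos j_lt)) Sj); apply: (multiples_sub HS Sj).
  by rewrite inE dvdn_sub.
have ar : a \in index_iota 2 s.+1 by rewrite mem_index_iota generator_gt1.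
have := hilbert_eq a_le; rewrite coef_H // Sa.
rewrite (coef_prod_atom HS (generator_atom HS HA aA) P_factor).
rewrite (sum_single (iota_uniq _ _) ar Sa c_off) coef_cyc //.
by move=> /(congr1 -%R); rewrite opprK => <-.
Qed.

(* The value expected for c_j modulo the monomials x^t with s - t notin S. *)
Let G j := if j \in A then geom_trunc j s else 1.

Lemma generators_small : \prod_(a <- A | (a <= s)%N) geom_trunc a s =
                         \prod_(j <- index_iota 2 s.+1 | S j) G j.
Proof.
have [A_uniq _ _] := HA.
have A_perm : perm_eq [seq a <- A | (a <= s)%N] [seq j <- index_iota 2 s.+1 | j \in A].
  apply: uniq_perm; [exact: filter_uniq | exact: filter_uniq (iota_uniq _ _)|].
  move=> j; rewrite !mem_filter mem_index_iota ltnS.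
  by rewrite andbC; case: (boolP (j \in A)) => //= jA; rewrite generator_gt1.
rewrite -big_filter (perm_big _ A_perm) big_filter /G -big_mkcondr.
apply: eq_bigl => j /=; case: (boolP (j \in A)) => jA; rewrite ?andbT ?andbF //.
by rewrite (mem_generators HA jA).
Qed.

Hypothesis Ss : S s.
(* The assumption to be refuted: no d in E(S) satisfies d <=_S s. *)
Hypothesis no_E :
  forall d, (d <= s)%N -> (2 <= d)%N -> d \notin A -> S (s - d)%N -> e d = 0.

(* Each factor of P agrees with its expected value: if j <=_S s this is an
   equality (e_j = -1 for j in A, e_j = 0 otherwise), and if not both sides
   agree with 1. *)
Lemma factor_agree j : j \in index_iota 2 s.+1 -> S j ->
  [/\ unitary S (c j), unitary S (G j) & agree S s (c j) (G j)].
Proof.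
move=> jr Sj; have /andP[j_gt1 j_le] : (1 < j <= s)%N by rewrite mem_index_iota in jr.
have j_pos := ltnW j_gt1.
have GS : unitary S (G j).
  rewrite /G; case: ifP => jA; last exact: unitary1.
  exact: unitary_sub (multiples_sub HS Sj) (unitary_geom _ j_pos).
split=> //; first exact: P_factor.
case: (boolP (S (s - j)%N)) => Ssj.
  rewrite /G /c; case: ifP => jA; first by rewrite generator_exponent // cycN1.
  by rewrite no_E ?jA ?cyc0.
have c_one : agree S s (c j) 1 := agree_one HS Sj (unitary_cyc s (e j) j_pos) Ssj.
have G_one : agree S s (G j) 1.
  by rewrite /G; case: ifP => _ //; apply: agree_one HS Sj (unitary_geom _ j_pos) Ssj.
by move=> t t_le St; rewrite c_one ?G_one.
Qed.

(* Hence d(s) = [x^s] prod_{a in A} 1/(1 - x^a) = [x^s] P = [x^s] H = 1. *)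
Lemma unique_factorization : nfact A s = 1%N.
Proof.
have PG : agree S s P (\prod_(j <- index_iota 2 s.+1 | S j) G j).
  exact: agree_prod HS factor_agree.
apply/eqP; rewrite -(eqr_nat int) nfact_coef (bigID (fun a => a <= s)%N) /=.
rewrite (eq_uptoM (fun i _ => erefl) (@prod_geom_beyond A s) (leqnn s)) mulr1.
have S0 : S 0%N by case: HS.
rewrite generators_small -(PG s (leqnn s)) ?subnn //.
by rewrite -(hilbert_eq (leqnn s)) coef_H // Ss.
Qed.

End Exponents.

Unset Implicit Arguments.

Theorem proposition5p2 (S : pred nat) (A : seq nat) (e : nat -> int) :
  numerical_semigroup S ->
  minimal_generating_set S A ->
  cyclotomic_exponents S e ->
  forall s : nat, S s -> (2 <= nfact A s)%N ->
  exists d : nat, in_E A e d /\ leS S d s.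
Proof.
move=> [S0 SD _] HA He s Ss two_fact; have HS : submonoid S by [].
case: (boolP [exists d : 'I_s.+1, [&& 2 <= d, e d != 0%R, (d : nat) \notin A & S (s - d)]]).
  move=> /existsP[[d d_le] /= /and4P[d_gt1 ed dA Ssd]].
  by exists d; split; last split; rewrite // -ltnS.
move=> no_E; suff nfact1 : nfact A s = 1 by move: two_fact; rewrite nfact1.
have [S1|S1] := boolP (S 1); first exact: nfact_one_in HS HA S1.
have [->|s_pos] := posnP s; first exact: nfact0.
apply: (unique_factorization HS HA He S1 s_pos Ss) => d d_le d_gt1 dA Ssd.
apply/eqP; apply: contraNT no_E => ed; apply/existsP.
by exists (Ordinal (d_le : d < s.+1)); rewrite /= d_gt1 ed dA Ssd.
Qed.
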